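(* Consider the Bregman proximal augmented Lagrangian method described in the context with $\psi=\frac12\|\cdot\|^2$ (so that $x^{k+1}=x^k-\sigma_kv^k$), $\phi$ Legendre, and $0\le\rho_k\le\rho<1$. Let $(x^\star,y^\star)\in\operatorname{zer}T$ with $y^\star\in\operatorname{dom}\phi$. Then $\{s^k\}_{k\ge0}$ is bounded, $v^k\to0$, and $\langle u^k,y^{k+1}-y^\star\rangle\to0$.
   Context: Let $f\in\Gamma_0(\mathbb{R}^n)$, $g\in\Gamma_0(\mathbb{R}^m)$ (proper lsc convex functions with values in $\mathbb{R}\cup\{+\infty\}$), $A\in\mathbb{R}^{m\times n}$, $b\in\mathbb{R}^m$, $\mathcal{A}(x)=Ax-b$. The Lagrangian is $L(x,y)=f(x)+\langle\mathcal{A}(x),y\rangle-g^*(y)$, $g^*$ the convex conjugate, and the KKT operator is $T(x,y)=(\partial f(x)+A^\top y)\times(\partial g^*(y)+b-Ax)$, which is maximal monotone; $\operatorname{zer}T=T^{-1}(0)$ is the set of saddle points of $L$. A function $h\in\Gamma_0$ is Legendre if it is essentially smooth ($\operatorname{int}\operatorname{dom}h\ne\emptyset$, differentiable there, $\|\nabla h(z^\nu)\|\to\infty$ whenever $\operatorname{int}\operatorname{dom}h\ni z^\nu\to z\in\operatorname{bdry}\operatorname{dom}h$) and essentially strictly convex (strictly convex on every convex subset of $\operatorname{dom}\partial h$); $\nabla h^*$ is then the inverse of $\nabla h$ on the interiors of the domains. $D_h(a,c)=h(a)-h(c)-\langle\nabla h(c),a-c\rangle$ for $a\in\operatorname{dom}h$,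 $c\in\operatorname{int}\operatorname{dom}h$, $+\infty$ otherwise. Let $\psi\in\Gamma_0(\mathbb{R}^n)$, $\phi\in\Gamma_0(\mathbb{R}^m)$ be Legendre, $\Phi(x,y)=\psi(x)+\phi(y)$, and assume $\operatorname{int}\operatorname{dom}\Phi\cap\operatorname{dom}T\ne\emptyset$. Bregman proximal augmented Lagrangian method: given $x^0\in\operatorname{int}\operatorname{dom}\psi$, $y^0\in\operatorname{int}\operatorname{dom}\phi$, step sizes $\sigma_k\ge\sigma>0$ and $\rho_k\in[0,1)$, it generates $s^k\in\operatorname{dom}\psi$, $x^{k+1},y^{k+1},v^k,u^k$ with $(v^k,u^k)\in T(s^k,y^{k+1})$, $x^{k+1}=\nabla\psi^*(\nabla\psi(x^k)-\sigma_kv^k)\in\operatorname{int}\operatorname{dom}\psi$, $y^{k+1}=\nabla\phi^*(\nabla\phi(y^k)-\sigma_ku^k)\in\operatorname{int}\operatorname{dom}\phi$, and $D_\psi(s^k,x^{k+1})\le\rho_k\big(D_\psi(s^k,x^k)+D_\phi(y^{k+1},y^k)\big)$. (This is the inexact Bregman proximal point algorithm for $T$ with $\Phi$, $z^k=(x^k,y^k)$, $p^k=(s^k,y^{k+1})$, $w^k=(v^k,u^k)$.) *)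

From HB Require Import structures.
From mathcomp Require Import all_boot all_order all_algebra.
From mathcomp Require Import all_classical all_reals all_analysis.
Set Implicit Arguments. Unset Strict Implicit. Unset Printing Implicit Defensive.
Import Order.TTheory GRing.Theory Num.Theory.
Import numFieldNormedType.Exports.
Local Open Scope classical_set_scope.
Local Open Scope ring_scope.

Section Defs.
Variable R : realType.

Definition ip (n : nat) (x y : 'rV[R]_n) : R := \sum_(i < n) x ord0 i * y ord0 i.

Local Open Scope ereal_scope.

Definition edom (n : nat) (h : 'rV[R]_n -> \bar R) : set 'rV[R]_n :=
  [set x | h x < +oo].

Definition proper_fun (n : nat) (h : 'rV[R]_n -> \bar R) : Prop :=
  (forall x, h x != -oo) /\ (exists x, h x < +oo).

Definition convex_efun (n : nat) (h : 'rV[R]_n -> \bar R) : Prop :=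
  forall (x y : 'rV[R]_n) (t : R), (0 <= t <= 1)%R ->
    h (t *: x + (1 - t) *: y)%R <= t%:E * h x + (1 - t)%:E * h y.

Definition Gamma0 (n : nat) (h : 'rV[R]_n -> \bar R) : Prop :=
  [/\ proper_fun h, lower_semicontinuous h & convex_efun h].

Definition conjf (n : nat) (h : 'rV[R]_n -> \bar R) : 'rV[R]_n -> \bar R :=
  fun y => ereal_sup [set (ip x y)%:E - h x | x in [set: 'rV[R]_n]].

Definition subdiff (n : nat) (h : 'rV[R]_n -> \bar R) (x v : 'rV[R]_n) : Prop :=
  h x \is a fin_num /\ forall z, h x + (ip v (z - x)%R)%:E <= h z.

Definition is_grad (n : nat) (h : 'rV[R]_n -> \bar R) (z g : 'rV[R]_n) : Prop :=
  h z \is a fin_num /\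
  forall e : R, (0 < e)%R -> exists2 d : R, (0 < d)%R &
    forall w : 'rV[R]_n, (`|w| < d)%R ->
      h (z + w)%R \is a fin_num /\
      (`|fine (h (z + w)%R) - fine (h z) - ip g w| <= e * `|w|)%R.

(* the gradient (meaningful where h is differentiable; 0 otherwise) *)
Definition grad (n : nat) (h : 'rV[R]_n -> \bar R) (z : 'rV[R]_n) : 'rV[R]_n :=
  xget 0%R [set g | is_grad h z g].

Definition convex_set (n : nat) (C : set 'rV[R]_n) : Prop :=
  forall x y (t : R), C x -> C y -> (0 <= t <= 1)%R -> C (t *: x + (1 - t) *: y)%R.

Definition ess_smooth (n : nat) (h : 'rV[R]_n -> \bar R) : Prop :=
  [/\ interior (edom h) !=set0,
      (forall z, interior (edom h) z -> exists g, is_grad h z g) &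
      (forall (z : 'rV[R]_n) (zs : nat -> 'rV[R]_n),
         closure (edom h) z -> ~ interior (edom h) z ->
         (forall k, interior (edom h) (zs k)) -> zs @ \oo --> z ->
         forall M : R, exists N, forall k, (N <= k)%N -> (M < `|grad h (zs k)|)%R)].

Definition ess_strictly_convex (n : nat) (h : 'rV[R]_n -> \bar R) : Prop :=
  forall C : set 'rV[R]_n, convex_set C -> C `<=` [set x | exists v, subdiff h x v] ->
    forall x y (t : R), C x -> C y -> x != y -> (0 < t < 1)%R ->
      h (t *: x + (1 - t) *: y)%R < t%:E * h x + (1 - t)%:E * h y.

Definition Legendre (n : nat) (h : 'rV[R]_n -> \bar R) : Prop :=
  [/\ Gamma0 h, ess_smooth h & ess_strictly_convex h].

Definition Bregman (n : nat) (h : 'rV[R]_n -> \bar R) (a c : 'rV[R]_n) : \bar R :=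
  if `[< edom h a /\ interior (edom h) c >] then
    (fine (h a) - fine (h c) - ip (grad h c) (a - c))%R%:E
  else +oo.

(* KKT operator: (w1,w2) \in T(x,y) with T(x,y) = (df(x) + A^T y) x (dg^*(y) + b - Ax).
   Row-vector convention: A^T y is  y *m A,  A x is  x *m A^T. *)
Definition KKT (n m : nat) (f : 'rV[R]_n -> \bar R) (g : 'rV[R]_m -> \bar R)
  (A : 'M[R]_(m, n)) (b : 'rV[R]_m) (x : 'rV[R]_n) (y : 'rV[R]_m)
  (w1 : 'rV[R]_n) (w2 : 'rV[R]_m) : Prop :=
  (exists2 a, subdiff f x a & w1 = a + y *m A)%R /\
  (exists2 c, subdiff (conjf g) y c & w2 = c + b - x *m A^T)%R.

Definition half_sqnorm (n : nat) (x : 'rV[R]_n) : \bar R := (2^-1 * ip x x)%:E.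

End Defs.

(* With [psi = |.|^2/2] the primal step reads [x_{k+1} = x_k - sigma_k v_k], and the fact that
   [grad phi^*] inverts [grad phi] turns the dual step into
   [grad phi (y_{k+1}) = grad phi (y_k) - sigma_k u_k].  Two three-point identities then show
   that the energy [E_k = |x_k - x*|^2/2 + D_phi(y*, y_k)] satisfies
     E_{k+1} + sigma_k M_k + (1 - rho_k) (|s_k - x_k|^2/2 + D_phi(y_{k+1}, y_k)) <= E_k,
   where [M_k = <v_k, s_k - x*> + <u_k, y_{k+1} - y*>] is nonnegative by monotonicity of the
   KKT operator and the inexactness criterion absorbs [|s_k - x_{k+1}|^2/2].  Hence [E] is
   nonincreasing and nonnegative, its decrements tend to 0, and they dominate [M_k],
   [|s_k - x_k|^2] and [|sigma_k v_k|^2 <= 2|x_k - s_k|^2 + 2|s_k - x_{k+1}|^2].  This bounds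
   [s], sends [v] to 0, and so also [<u_k, y_{k+1} - y*> = M_k - <v_k, s_k - x*>]. *)

From HB Require Import structures.
From mathcomp Require Import all_boot all_order all_algebra.
From mathcomp Require Import all_classical all_reals all_analysis.
From mathcomp Require Import ring lra.
Import Order.TTheory GRing.Theory Num.Theory.
Import numFieldNormedType.Exports.
Local Open Scope classical_set_scope.
Local Open Scope ring_scope.

Section InnerProduct.
Context {R : realType} {n : nat}.
Implicit Types x y z : 'rV[R]_n.

Lemma ipC x y : ip x y = ip y x.
Proof. by apply: eq_bigr => i _; rewrite mulrC. Qed.

Lemma ipDl x y z : ip (x + y) z = ip x z + ip y z.
Proof. by rewrite /ip -big_split; apply: eq_bigr => i _; rewrite mxE mulrDl. Qed.

Lemma ipZl a x z : ip (a *: x) z = a * ip x z.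
Proof. by rewrite /ip mulr_sumr; apply: eq_bigr => i _; rewrite mxE mulrA. Qed.

Lemma ipNl x z : ip (- x) z = - ip x z.
Proof. by rewrite -scaleN1r ipZl mulN1r. Qed.

Lemma ipBl x y z : ip (x - y) z = ip x z - ip y z.
Proof. by rewrite ipDl ipNl. Qed.

Lemma ipDr x y z : ip z (x + y) = ip z x + ip z y.
Proof. by rewrite ipC ipDl !(ipC z). Qed.

Lemma ipZr a x z : ip z (a *: x) = a * ip z x.
Proof. by rewrite ipC ipZl ipC. Qed.

Lemma ipNr x z : ip z (- x) = - ip z x.
Proof. by rewrite ipC ipNl ipC. Qed.

Lemma ipBr x y z : ip z (x - y) = ip z x - ip z y.
Proof. by rewrite ipDr ipNr. Qed.

Lemma ip_ge0 x : 0 <= ip x x.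
Proof. by rewrite /ip sumr_ge0 // => i _; rewrite -expr2 sqr_ge0. Qed.

Lemma ip_sqrD_le x y : ip (x + y) (x + y) <= 2 * ip x x + 2 * ip y y.
Proof. have := ip_ge0 (x - y); rewrite !(ipBl, ipDl, ipBr, ipDr) (ipC y x); lra. Qed.

(* The norm of ['rV_n] is the sup norm. *)
Lemma norm_coord_le x i : `|x ord0 i| <= `|x|.
Proof.
have /mapP[j Hj ->] : `|x ord0 i| \in [seq `|x k.1 k.2| | k : 'I_1 * 'I_n].
  by apply/mapP; exists (ord0, i) => //=; rewrite mem_enum.
by rewrite [leRHS]/Num.norm /= mx_normrE; apply/bigmax_geP; right => /=; exists j.
Qed.

Lemma sqr_norm_le_ip x : `|x| ^+ 2 <= ip x x.
Proof.
have [->|x0] := eqVneq `|x| 0; first by rewrite expr0n /= ip_ge0.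
have [[i j] /= xij] := mx_norm_neq0 x0.
rewrite -[`|x|]/(mx_norm x) xij.
have -> : i = ord0 by apply: ord_inj; case: (i) => -[].
rewrite real_normK ?num_real // /ip (bigD1 j) //= -expr2 lerDl.
by rewrite sumr_ge0 // => k _; rewrite -expr2 sqr_ge0.
Qed.

Lemma norm_ip_le x y : `|ip x y| <= n%:R * (`|x| * `|y|).
Proof.
apply: le_trans (ler_norm_sum _ _ _) _.
rewrite -[n in n%:R]card_ord mulr_natl -sumr_const.
by apply: ler_sum => i _; rewrite normrM ler_pM ?norm_coord_le.
Qed.

Lemma ip_le_sqr_norm x : ip x x <= n%:R * `|x| ^+ 2.
Proof. by rewrite expr2; apply: le_trans (ler_norm _) (norm_ip_le _ _). Qed.

Lemma norm_le_1Dip x : `|x| <= 1 + ip x x.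
Proof.
apply: le_trans (_ : 1 + `|x| ^+ 2 <= _); last by rewrite lerD2l sqr_norm_le_ip.
have [x1|x1] := leP `|x| 1; first by rewrite ler_wpDr ?sqr_ge0.
by rewrite ler_wpDl // expr2 ler_peMl // ltW.
Qed.

End InnerProduct.

Lemma ip_mulmx_tr {R : realType} {n m : nat} (A : 'M[R]_(m, n))
    (x : 'rV[R]_n) (y : 'rV[R]_m) :
  ip (y *m A) x = ip (x *m A^T) y.
Proof.
rewrite /ip; under eq_bigr do rewrite mxE big_distrl.
rewrite exchange_big; apply: eq_bigr => j _; rewrite mxE big_distrl.
by apply: eq_bigr => i _; rewrite !mxE /=; ring.
Qed.

Section ConvexAnalysis.
Context {R : realType} {d : nat}.
Implicit Types (h : 'rV[R]_d -> \bar R) (z w p q : 'rV[R]_d).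

Lemma proper_edom_fin {h z} : proper_fun h -> edom h z -> h z \is a fin_num.
Proof. by move=> [hn _] hz; rewrite fin_numE hn /= (lt_eqF hz). Qed.

Lemma proper_fin_or_pinfty {h} : proper_fun h ->
  forall z, h z \is a fin_num \/ h z = +oo%E.
Proof.
move=> [hn _] z; have [hz|hz] := eqVneq (h z) +oo%E; first by right.
by left; rewrite fin_numE hn hz.
Qed.

Lemma small_step_exists {c e : R} : 0 <= c -> 0 < e ->
  exists t, [/\ 0 < t, t < 1 & t * c < e].
Proof.
move=> c0 e0; pose mu := Num.min e 1.
have mu0 : 0 < mu by rewrite lt_min e0 ltr01.
have mue : mu <= e by rewrite ge_min lexx.
have mu1 : mu <= 1 by rewrite ge_min lexx orbT.
exists (mu / (2 * (c + 1))).
have : mu / (2 * (c + 1)) * (2 * (c + 1)) = mu.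
  by rewrite divfK // mulf_neq0 // gt_eqF // ltr_wpDl.
move: (mu / _) => t; split; nra.
Qed.

Lemma absorb_factor {c e : R} : 0 <= c -> 0 < e ->
  exists2 e', 0 < e' & e' * c <= e.
Proof.
move=> c0 e0; exists (e / (c + 1)); first by rewrite divr_gt0 // ltr_wpDl.
by rewrite mulrAC ler_pdivrMr ?ltr_wpDl //; nra.
Qed.

Lemma is_grad_subdiff {h z q} : proper_fun h -> convex_efun h ->
  is_grad h z q -> subdiff h z q.
Proof.
move=> hp hc [hz hg]; split=> // w.
have [hw|->] := proper_fin_or_pinfty hp w; last by rewrite leey.
rewrite -(fineK hz) -(fineK hw) -EFinD lee_fin; apply/ler_addgt0Pr => e e0.
have [e' e'0 e'c] := absorb_factor (normr_ge0 (w - z)) e0.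
have [del del0 Hd] := hg e' e'0.
have [t [t0 t1 tc]] := small_step_exists (normr_ge0 (w - z)) del0.
have := Hd (t *: (w - z)); rewrite normrZ (ger0_norm (ltW t0)) => /(_ tc) [hzw].
rewrite ipZr ler_norml => /andP[Hn _].
have t01 : 0 <= t <= 1 by rewrite !ltW.
have := hc w z t t01.
rewrite (_ : t *: w + (1 - t) *: z = z + t *: (w - z)); last first.
  by apply/rowP => i; rewrite !mxE; ring.
rewrite -(fineK hzw) -(fineK hw) -(fineK hz) -!EFinM -EFinD lee_fin => Hc.
have : t * (ip q (w - z) - e' * `|w - z| - (fine (h w) - fine (h z))) <= 0 by lra.
rewrite pmulr_rle0 //; lra.
Qed.

Lemma subdiff_is_gradE {h z p q} : is_grad h z q -> subdiff h z p -> p = q.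
Proof.
move=> [hz hg] [_ hs]; apply/eqP; rewrite -subr_eq0; apply/eqP.
set D := p - q.
have [/eqP|Dn] := eqVneq `|D| 0; first by rewrite normr_eq0 => /eqP.
have Dp : 0 < `|D| by rewrite lt_neqAle eq_sym Dn normr_ge0.
exfalso.
have [del del0 Hd] := hg (`|D| / 2) (divr_gt0 Dp (ltr0Sn _ 1)).
have [t [t0 t1 tc]] := small_step_exists (normr_ge0 D) del0.
have := Hd (t *: D); rewrite normrZ (ger0_norm (ltW t0)) => /(_ tc) [hzD].
rewrite ler_norml => /andP[_ Hn].
have := hs (z + t *: D); rewrite [z + _ - z]addrAC subrr add0r.
rewrite -(fineK hzD) -(fineK hz) -EFinD lee_fin => Hs.
have : t * ip D D <= `|D| / 2 * (t * `|D|) by rewrite -ipZr ipBl; lra.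
have : t * `|D| ^+ 2 <= t * ip D D by rewrite ler_pM2l // sqr_norm_le_ip.
have : 0 < t * `|D| ^+ 2 by rewrite mulr_gt0 // exprn_gt0.
lra.
Qed.

Lemma fenchel_young {h p x} : conjf h p \is a fin_num -> h x \is a fin_num ->
  ip x p - fine (h x) <= fine (conjf h p).
Proof.
move=> hP hx; rewrite -lee_fin EFinB (fineK hP) (fineK hx).
by apply: ereal_sup_ubound; exists x.
Qed.

Lemma conjf_segment_le {h p q y t} : proper_fun h -> conjf h p \is a fin_num ->
  subdiff h y q -> 0 <= t <= 1 ->
  (conjf h (p + t *: (q - p))
    <= ((1 - t) * fine (conjf h p) + t * (ip y q - fine (h y)))%:E)%E.
Proof.
move=> hp hP [hy Hq] /andP[t0 t1]; apply: ge_ereal_sup => _ [x _ <-].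
have [hx|->] := proper_fin_or_pinfty hp x; last by rewrite addeNy leNye.
have := Hq x; rewrite -(fineK hx) -(fineK hy) -EFinD -EFinB !lee_fin.
have := fenchel_young hP hx.
rewrite ipDr ipZr !ipBr !(ipC q) => FY Hxq; nra.
Qed.

(* Moving [p] towards [q] and comparing the first-order expansion of [h^*] at [p] with
   [conjf_segment_le] shows that [y] attains the supremum defining [h^* p]. *)
Lemma conjf_grad_le {h p y q} : proper_fun h ->
  is_grad (conjf h) p y -> subdiff h y q ->
  fine (conjf h p) <= ip y p - fine (h y).
Proof.
move=> hp [hP hg] hq; apply/ler_addgt0Pr => e e0.
set D := q - p.
have [e' e'0 e'D] := absorb_factor (normr_ge0 D) e0.
have [del del0 Hd] := hg e' e'0.
have [t [t0 t1 tD]] := small_step_exists (normr_ge0 D) del0.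
have := Hd (t *: D); rewrite normrZ (ger0_norm (ltW t0)) => /(_ tD) [hF].
rewrite ipZr ler_norml => /andP[Hlow _].
have t01 : 0 <= t <= 1 by rewrite !ltW.
have := conjf_segment_le hp hP hq t01.
rewrite -/D -(fineK hF) lee_fin => Hup.
have : t * (fine (conjf h p) + ip y D - e' * `|D| - (ip y q - fine (h y))) <= 0.
  by lra.
rewrite pmulr_rle0 // /D ipBr; lra.
Qed.

Lemma conjf_grad_subdiff {h p y q} : proper_fun h -> convex_efun h ->
  is_grad (conjf h) p y -> is_grad h y q -> subdiff h y p.
Proof.
move=> hp hc Hp Hq; have hy := Hq.1.
have key := conjf_grad_le hp Hp (is_grad_subdiff hp hc Hq).
split=> // w; have [hw|->] := proper_fin_or_pinfty hp w; last by rewrite leey.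
have := fenchel_young Hp.1 hw.
rewrite -(fineK hw) -(fineK hy) -EFinD lee_fin ipBr (ipC p w) (ipC p y); lra.
Qed.

Lemma is_grad_grad {h z} :
  (exists q, is_grad h z q) -> is_grad h z (grad h z).
Proof. by move=> [q hq]; rewrite /grad; apply: xgetPex; exists q. Qed.

Lemma is_grad_gradE {h z q} :
  subdiff h z q -> is_grad h z q -> grad h z = q.
Proof.
move=> hq Hq; have Hgrad : is_grad h z (grad h z) by apply: is_grad_grad; exists q.
by rewrite (subdiff_is_gradE Hgrad hq).
Qed.

Lemma BregmanE h a c :
  edom h a -> interior (edom h) c ->
  Bregman h a c = (fine (h a) - fine (h c) - ip (grad h c) (a - c))%:E.
Proof. by move=> ha hc; rewrite /Bregman asboolT. Qed.

End ConvexAnalysis.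

Section HalfSquaredNorm.
Context {R : realType} {n : nat}.
Implicit Types a c : 'rV[R]_n.

Lemma half_sqnorm_subdiff c : subdiff (@half_sqnorm R n) c c.
Proof.
split=> // z; rewrite /half_sqnorm lee_fin.
have := ip_ge0 (z - c); rewrite !(ipBl, ipBr) (ipC c z); lra.
Qed.

Lemma half_sqnorm_is_grad c : is_grad (@half_sqnorm R n) c c.
Proof.
split=> // e e0; exists (e / (n%:R + 1)); first by rewrite divr_gt0 // ltr_wpDl.
move=> w; rewrite ltr_pdivlMr ?ltr_wpDl // => hw; split=> //.
rewrite /half_sqnorm /= !(ipDl, ipDr) (ipC w c).
rewrite (_ : _ - _ - _ = 2^-1 * ip w w); last by rewrite !mulrDr; lra.
rewrite ger0_norm ?mulr_ge0 ?ip_ge0 //.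
have := ip_le_sqr_norm w; have := normr_ge0 w; rewrite expr2; nra.
Qed.

Lemma Bregman_half_sqnorm a c :
  Bregman (@half_sqnorm R n) a c = (2^-1 * ip (a - c) (a - c))%:E.
Proof.
have domT : edom (@half_sqnorm R n) = setT.
  by rewrite predeqE => z; split => // _; rewrite /edom /= ltey.
rewrite BregmanE ?domT ?interiorT //.
rewrite (is_grad_gradE (half_sqnorm_subdiff c) (half_sqnorm_is_grad c)) /=.
by congr (_%:E); rewrite !(ipBl, ipBr) (ipC a c); field.
Qed.

End HalfSquaredNorm.

Section StepIdentities.
Context {R : realType}.

Lemma euclidean_step_identity {n : nat} {x0 x1 v : 'rV[R]_n} {sg : R} (s xs : 'rV[R]_n) :
  x1 = x0 - sg *: v ->
  2^-1 * ip (x1 - xs) (x1 - xs) = 2^-1 * ip (x0 - xs) (x0 - xs)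
   - sg * ip v (s - xs) + 2^-1 * ip (s - x1) (s - x1) - 2^-1 * ip (s - x0) (s - x0).
Proof.
move=> ->; rewrite !(ipDl, ipBl, ipZl, ipNl, ipDr, ipBr, ipZr, ipNr).
by rewrite ?(ipC xs x0) ?(ipC s x0) ?(ipC v x0) ?(ipC s xs) ?(ipC v xs) ?(ipC v s); field.
Qed.

Lemma bregman_step_identity {m : nat} {G0 G1 u : 'rV[R]_m} {sg : R}
    (y0 y1 ys : 'rV[R]_m) (f0 f1 fs : R) :
  G1 = G0 - sg *: u ->
  fs - f1 - ip G1 (ys - y1) =
  (fs - f0 - ip G0 (ys - y0)) - (f1 - f0 - ip G0 (y1 - y0)) - sg * ip u (y1 - ys).
Proof. by move=> ->; rewrite !(ipBl, ipZl, ipBr); ring. Qed.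

End StepIdentities.

Section Monotonicity.
Context {R : realType}.

Lemma subdiff_monotone {n : nat} {h : 'rV[R]_n -> \bar R} {x x' a a'} :
  subdiff h x a -> subdiff h x' a' -> 0 <= ip a (x - x') - ip a' (x - x').
Proof.
move=> [hx Ha] [hx' Ha']; have := Ha x'; have := Ha' x.
rewrite -(fineK hx) -(fineK hx') -!EFinD !lee_fin !ipBr; lra.
Qed.

Lemma KKT_monotone {n m : nat} {f g} {A : 'M[R]_(m, n)} {b x y w1 w2 x' y'} :
  KKT f g A b x y w1 w2 -> KKT f g A b x' y' 0 0 ->
  0 <= ip w1 (x - x') + ip w2 (y - y').
Proof.
move=> [[a ha ->] [c hc ->]] [[a' ha' e1] [c' hc' e2]].
have ea : a' = - (y' *m A) by apply/eqP; rewrite -addr_eq0 -e1.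
have ec : c' = x' *m A^T - b by apply/eqP; rewrite -subr_eq0 opprB addrA -e2.
have := subdiff_monotone ha ha'; have := subdiff_monotone hc hc'.
have := ip_mulmx_tr A (x - x') (y - y'); rewrite ea ec !mulmxBl.
rewrite !(ipDl, ipBl, ipNl, ipDr, ipBr); lra.
Qed.

End Monotonicity.

Section ConvergenceTools.
Context {R : realType}.

Lemma nonincreasing_decrement_cvg0 (E : R ^nat) :
  (forall k, 0 <= E k) -> (forall k, E k.+1 <= E k) ->
  (fun k => E k - E k.+1) @ \oo --> 0.
Proof.
move=> E0 Edec; have Enoninc : nonincreasing_seq E by apply/nonincreasing_seqP.
have lbE : has_lbound (range E) by exists 0 => _ [k _ <-].
have hE := nonincreasing_cvgn Enoninc lbE.
have hES : (fun k => E k.+1) @ \oo --> inf (range E) by rewrite cvg_shiftS.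
have := cvgB hE hES; rewrite subrr; exact.
Qed.

Lemma cvg0_norm_le {V W : normedModType R} {a : nat -> V} {b : nat -> W} {C : R} :
  0 < C -> (forall k, `|a k| <= C * `|b k|) -> b @ \oo --> 0 -> a @ \oo --> 0.
Proof.
move=> C0 ab /cvgr0Pnorm_lt b0; apply/cvgr0Pnorm_lt => e e0.
apply: filterS (b0 _ (divr_gt0 e0 C0)) => k bk.
by apply: le_lt_trans (ab k) _; rewrite mulrC -ltr_pdivlMr.
Qed.

Lemma cvg0_sqr_norm_le {V : normedModType R} {w : nat -> V} {d : R ^nat} {c : R} :
  0 < c -> (forall k, c * `|w k| ^+ 2 <= d k) -> d @ \oo --> 0 -> w @ \oo --> 0.
Proof.
move=> c0 wd /cvgr0Pnorm_lt d0; apply/cvgr0Pnorm_lt => e e0.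
apply: filterS (d0 _ (mulr_gt0 c0 (exprn_gt0 2 e0))) => k dk.
have : c * `|w k| ^+ 2 < c * e ^+ 2 by apply: le_lt_trans (wd k) (le_lt_trans (ler_norm _) dk).
rewrite ltr_pM2l //; have := normr_ge0 (w k); rewrite !expr2; nra.
Qed.

End ConvergenceTools.

Section BregmanProximalALM.
Variables (R : realType) (n m : nat).
Variables (f : 'rV[R]_n -> \bar R) (g : 'rV[R]_m -> \bar R).
Variables (A : 'M[R]_(m, n)) (b : 'rV[R]_m) (phi : 'rV[R]_m -> \bar R).
Variables (sigma rho : nat -> R) (sigma0 rho0 : R).
Variables (x s v : nat -> 'rV[R]_n) (y u : nat -> 'rV[R]_m).
Variables (xstar : 'rV[R]_n) (ystar : 'rV[R]_m).

Hypothesis phi_proper : proper_fun phi.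
Hypothesis phi_convex : convex_efun phi.
Hypothesis phi_diff : forall z, interior (edom phi) z -> exists q, is_grad phi z q.
Hypothesis sigma0_gt0 : 0 < sigma0.
Hypothesis sigma_ge : forall k, sigma0 <= sigma k.
Hypothesis rho0_lt1 : rho0 < 1.
Hypothesis rho_bound : forall k, 0 <= rho k <= rho0.
Hypothesis y0_int : interior (edom phi) (y 0%N).
Hypothesis step_KKT : forall k, KKT f g A b (s k) (y k.+1) (v k) (u k).
Hypothesis x_step : forall k, x k.+1 = x k - sigma k *: v k.
Hypothesis yS_int : forall k, interior (edom phi) (y k.+1).
Hypothesis y_step :
  forall k, is_grad (conjf phi) (grad phi (y k) - sigma k *: u k) (y k.+1).
Hypothesis inexact : forall k,
  (Bregman (@half_sqnorm R n) (s k) (x k.+1)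
     <= (rho k)%:E * (Bregman (@half_sqnorm R n) (s k) (x k)
                     + Bregman phi (y k.+1) (y k)))%E.
Hypothesis star_KKT : KKT f g A b xstar ystar 0 0.
Hypothesis ystar_dom : edom phi ystar.

(* The real-valued [Bregman phi a c], for [a] in [dom phi] and [c] in its interior. *)
Definition Dphi a c := fine (phi a) - fine (phi c) - ip (grad phi c) (a - c).

Definition energy k :=
  2^-1 * ip (x k - xstar) (x k - xstar) + Dphi ystar (y k).

Definition gap k := ip (v k) (s k - xstar) + ip (u k) (y k.+1 - ystar).

Definition residual k := 2^-1 * ip (s k - x k) (s k - x k) + Dphi (y k.+1) (y k).

Definition decrement k := energy k - energy k.+1.

Lemma y_int k : interior (edom phi) (y k).
Proof. by case: k. Qed.

Lemma y_dom k : edom phi (y k).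
Proof. apply: interior_subset; exact: y_int. Qed.

Lemma subdiff_phi_y k : subdiff phi (y k) (grad phi (y k)).
Proof. exact/(is_grad_subdiff phi_proper phi_convex)/is_grad_grad/phi_diff/y_int. Qed.

Lemma grad_phi_yS k : grad phi (y k.+1) = grad phi (y k) - sigma k *: u k.
Proof.
have Hgrad := is_grad_grad (phi_diff _ (y_int k.+1)).
have := conjf_grad_subdiff phi_proper phi_convex (y_step k) Hgrad.
by move/(subdiff_is_gradE Hgrad) ->.
Qed.

Lemma Dphi_y_ge0 {z} k : edom phi z -> 0 <= Dphi z (y k).
Proof.
move=> hz; have [hy /(_ z)] := subdiff_phi_y k.
rewrite -(fineK hy) -(fineK (proper_edom_fin phi_proper hz)) -EFinD lee_fin.
by rewrite /Dphi subr_ge0 lerBrDl.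
Qed.

Lemma Dphi_step_ge0 k : 0 <= Dphi (y k.+1) (y k).
Proof. exact: Dphi_y_ge0 k (y_dom k.+1). Qed.

Lemma residual_ge0 k : 0 <= residual k.
Proof.
apply: addr_ge0; first by rewrite mulr_ge0 ?ip_ge0.
exact: Dphi_step_ge0.
Qed.

Lemma energy_ge0 k : 0 <= energy k.
Proof. by rewrite addr_ge0 ?mulr_ge0 ?ip_ge0 // Dphi_y_ge0. Qed.

Lemma gap_ge0 k : 0 <= gap k.
Proof. exact: KKT_monotone (step_KKT k) star_KKT. Qed.

Lemma inexact_residual k :
  2^-1 * ip (s k - x k.+1) (s k - x k.+1) <= rho k * residual k.
Proof.
have := inexact k.
rewrite !Bregman_half_sqnorm (BregmanE _ _ _ (y_dom _) (y_int _)).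
by rewrite -EFinD -EFinM lee_fin.
Qed.

Lemma energy_step k :
  energy k.+1 + sigma k * gap k + (1 - rho k) * residual k <= energy k.
Proof.
have Ex := euclidean_step_identity (s k) xstar (x_step k).
have Ey := bregman_step_identity (y k) (y k.+1) ystar (fine (phi (y k)))
  (fine (phi (y k.+1))) (fine (phi ystar)) (grad_phi_yS k).
have := inexact_residual k.
rewrite /energy /gap /residual /Dphi Ex Ey; lra.
Qed.

Lemma energy_step_uniform k :
  energy k.+1 + sigma0 * gap k + (1 - rho0) * residual k <= energy k.
Proof.
have := energy_step k; have /andP[_ rho_le] := rho_bound k.
have : sigma0 * gap k <= sigma k * gap k by rewrite ler_wpM2r ?gap_ge0.
have : (1 - rho0) * residual k <= (1 - rho k) * residual k.
  by rewrite ler_wpM2r ?residual_ge0 // lerB.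
lra.
Qed.

Lemma energy_descent k : energy k.+1 + sigma0 * gap k <= energy k /\
  energy k.+1 + (1 - rho0) * residual k <= energy k.
Proof.
have := energy_step_uniform k.
have : 0 <= sigma0 * gap k by rewrite mulr_ge0 ?gap_ge0 ?ltW.
have : 0 <= (1 - rho0) * residual k by rewrite mulr_ge0 ?residual_ge0 // subr_ge0 ltW.
lra.
Qed.

Lemma gap_le_decrement k : sigma0 * gap k <= decrement k.
Proof. by have [+ _] := energy_descent k; rewrite /decrement; lra. Qed.

Lemma residual_le_decrement k : (1 - rho0) * residual k <= decrement k.
Proof. by have [_ +] := energy_descent k; rewrite /decrement; lra. Qed.

Lemma energy_nonincreasing : nonincreasing_seq energy.
Proof.
apply/nonincreasing_seqP => k; have [+ _] := energy_descent k.
have := mulr_ge0 (ltW sigma0_gt0) (gap_ge0 k); lra.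
Qed.

Lemma decrement_ge0 k : 0 <= decrement k.
Proof. by rewrite subr_ge0; exact: energy_nonincreasing. Qed.

Lemma energy_le_init k : energy k <= energy 0%N.
Proof. exact: energy_nonincreasing (leq0n k). Qed.

Lemma decrement_cvg0 : decrement @ \oo --> 0.
Proof.
apply: nonincreasing_decrement_cvg0 => [|k]; first exact: energy_ge0.
exact: energy_nonincreasing.
Qed.

Lemma s_bounded : exists M, forall k, `|s k| <= M.
Proof.
have Kx k : ip (x k - xstar) (x k - xstar) <= 2 * energy 0%N.
  have := energy_le_init k; have := Dphi_y_ge0 k ystar_dom.
  rewrite [energy k]/energy; lra.
have Ks k : ip (s k - x k) (s k - x k) <= 2 * energy 0%N / (1 - rho0).
  rewrite ler_pdivlMr ?subr_gt0 //.
  have := residual_le_decrement k; have := energy_le_init k.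
  have := energy_ge0 k.+1.
  have : 0 <= (1 - rho0) * Dphi (y k.+1) (y k).
    by rewrite mulr_ge0 ?Dphi_step_ge0 // subr_ge0 ltW.
  rewrite /residual /decrement; lra.
exists (3 + 2 * energy 0%N / (1 - rho0) + 2 * energy 0%N + `|xstar|) => k.
have -> : s k = (s k - x k) + (x k - xstar) + xstar.
  by apply/rowP => i; rewrite !mxE; ring.
apply: le_trans (ler_normD _ _) _; apply: le_trans (lerD (ler_normD _ _) (lexx _)) _.
have := norm_le_1Dip (s k - x k); have := norm_le_1Dip (x k - xstar).
have := Ks k; have := Kx k; lra.
Qed.

Lemma v_sqr_le_decrement k :
  sigma0 ^+ 2 * (1 - rho0) / 8 * `|v k| ^+ 2 <= decrement k.
Proof.
have hv : sigma k *: v k = (x k - s k) + (s k - x k.+1).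
  by rewrite x_step; apply/rowP => i; rewrite !mxE; ring.
have := ip_sqrD_le (x k - s k) (s k - x k.+1).
rewrite -hv ipZl ipZr -[x k - s k]opprB ipNl ipNr opprK => Hsum.
have Hsig : sigma0 ^+ 2 * `|v k| ^+ 2 <= sigma k * (sigma k * ip (v k) (v k)).
  rewrite mulrA -expr2 ler_pM ?sqr_ge0 ?sqr_norm_le_ip //.
  by rewrite lerXn2r ?nnegrE ?(ltW sigma0_gt0) ?(le_trans (ltW sigma0_gt0)).
have Hres : 2^-1 * ip (s k - x k) (s k - x k) <= residual k.
  by rewrite /residual lerDl Dphi_step_ge0.
have Hrho : rho k * residual k <= residual k.
  have /andP[r0 r1] := rho_bound k.
  by rewrite ler_piMl ?residual_ge0 // (le_trans r1) ?ltW.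
have Hinexact := inexact_residual k.
have : sigma0 ^+ 2 * `|v k| ^+ 2 <= 8 * residual k by lra.
have := residual_le_decrement k; have : 0 < 1 - rho0 by rewrite subr_gt0.
nra.
Qed.

Lemma v_cvg0 : v @ \oo --> (0 : 'rV[R]_n).
Proof.
have c0 : 0 < sigma0 ^+ 2 * (1 - rho0) / 8.
  by rewrite !mulr_gt0 ?exprn_gt0 ?invr_gt0 ?subr_gt0.
exact: (cvg0_sqr_norm_le c0 v_sqr_le_decrement decrement_cvg0).
Qed.

Lemma ip_u_cvg0 : (fun k => ip (u k) (y k.+1 - ystar)) @ \oo --> (0 : R).
Proof.
have [M sM] := s_bounded.
have gap_cvg0 : gap @ \oo --> 0.
  apply: (cvg0_norm_le (C := sigma0^-1) _ _ decrement_cvg0) => [|k].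
    by rewrite invr_gt0.
  rewrite ger0_norm ?gap_ge0 // ger0_norm ?decrement_ge0 //.
  by rewrite mulrC ler_pdivlMr // mulrC gap_le_decrement.
pose C := n%:R * (M + `|xstar|) + 1.
have ip_v_cvg0 : (fun k => ip (v k) (s k - xstar)) @ \oo --> 0.
  apply: (cvg0_norm_le (C := C) _ _ v_cvg0) => [|k].
    by rewrite ltr_wpDl // mulr_ge0 // addr_ge0 // (le_trans _ (sM 0%N)).
  apply: le_trans (norm_ip_le _ _) _.
  have : `|s k - xstar| <= M + `|xstar|.
    by apply: le_trans (ler_normB _ _) _; rewrite lerD2r.
  move=> hs; apply: (@le_trans _ _ (n%:R * (M + `|xstar|) * `|v k|)).
    by rewrite -mulrA ler_wpM2l // mulrC ler_wpM2r.
  by rewrite /C mulrDl mul1r lerDl.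
have -> : (fun k => ip (u k) (y k.+1 - ystar))
    = gap - (fun k => ip (v k) (s k - xstar)).
  by apply/funext => k; rewrite /gap /= addrAC subrr add0r.
have := cvgB gap_cvg0 ip_v_cvg0; rewrite subr0; exact.
Qed.

End BregmanProximalALM.

Theorem mainTheorem13 (R : realType) (n m : nat)
  (f : 'rV[R]_n -> \bar R) (g : 'rV[R]_m -> \bar R)
  (A : 'M[R]_(m, n)) (b : 'rV[R]_m) (phi : 'rV[R]_m -> \bar R)
  (sigma rho : nat -> R) (sigma0 rho0 : R)
  (x s v : nat -> 'rV[R]_n) (y u : nat -> 'rV[R]_m)
  (xstar : 'rV[R]_n) (ystar : 'rV[R]_m) :
  Gamma0 f -> Gamma0 g -> Legendre phi ->
  (* int dom Phi meets dom T  (dom psi = R^n) *)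
  (exists x0 y0 w1 w2, interior (edom phi) y0 /\ KKT f g A b x0 y0 w1 w2) ->
  0 < sigma0 -> (forall k, sigma0 <= sigma k) ->
  rho0 < 1 -> (forall k, 0 <= rho k <= rho0) ->
  interior (edom phi) (y 0%N) ->
  (forall k, KKT f g A b (s k) (y k.+1) (v k) (u k)) ->
  (forall k, x k.+1 = x k - sigma k *: v k) ->
  (forall k, interior (edom phi) (y k.+1)) ->
  (forall k, is_grad (conjf phi) (grad phi (y k) - sigma k *: u k) (y k.+1)) ->
  (forall k, (Bregman (@half_sqnorm R n) (s k) (x k.+1)
     <= (rho k)%:E * (Bregman (@half_sqnorm R n) (s k) (x k)
                     + Bregman phi (y k.+1) (y k)))%E) ->
  KKT f g A b xstar ystar 0 0 ->
  edom phi ystar ->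
  [/\ exists M : R, forall k, `|s k| <= M,
      v @ \oo --> (0 : 'rV[R]_n) &
      (fun k => ip (u k) (y k.+1 - ystar)) @ \oo --> (0 : R)].
Proof.
move=> _ _ [[phi_proper _ phi_convex] [_ phi_diff _] _] _ sigma0_gt0 sigma_ge
  rho0_lt1 rho_bound y0_int step_KKT x_step yS_int y_step inexact star_KKT
  ystar_dom.
split; [eapply s_bounded | eapply v_cvg0 | eapply ip_u_cvg0]; eassumption.
Qed.
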